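(* For all integers $l\ge1$ and $n\ge2$, $$\beth(3,l,n)\le (2l-1)(n-1)(n-2).$$
   Context: Fix a totally ordered alphabet $a_1<\dots<a_l$. A word is primitive if it is not of the form $v^k$ with $k>1$. A system of type $X(t,l)$ is a finite sequence $(w_1,\dots,w_N)$ of primitive words of length $t$ over this alphabet, no two of which are cyclic shifts of each other. For $1\le i\le N$, $1\le j\le t$, let $w(i,j)$ be the cyclic shift of $w_i$ beginning with its $j$-th letter. Define a strict partial order on the pairs $(i,j)$ by $(i_1,j_1)\prec(i_2,j_2)$ iff $i_1<i_2$ and $w(i_1,j_1)$ is lexicographically smaller than $w(i_2,j_2)$. The system is $n$-light if there are no $n$ pairwise $\prec$-incomparable pairs. $\beth(t,l,n)$ denotes the largest $N$ of an $n$-light system of type $X(t,l)$. *)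

From mathcomp Require Import all_boot.
Set Implicit Arguments. Unset Strict Implicit. Unset Printing Implicit Defensive.

(* Alphabet a_1 < ... < a_l is 'I_l with its natural order.
   Words are sequences of letters. *)

Fixpoint lexlt (s1 s2 : seq nat) : bool :=
  match s1, s2 with
  | x :: s1', y :: s2' => (x < y) || ((x == y) && lexlt s1' s2')
  | [::], _ :: _ => true
  | _, _ => false
  end.

Definition word_lt (l : nat) (u v : seq 'I_l) : bool :=
  lexlt (map val u) (map val v).

Definition primitive (l : nat) (w : seq 'I_l) : Prop :=
  forall (v : seq 'I_l) (k : nat), 1 < k -> w <> flatten (nseq k v).

Definition cyc_shift (l : nat) (u v : seq 'I_l) : Prop :=
  exists j, j < size u /\ rot j u = v.

Definition is_system (t l : nat) (ws : seq (seq 'I_l)) : Prop :=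
  (forall i, i < size ws -> size (nth [::] ws i) = t /\ primitive (nth [::] ws i))
  /\ (forall i1 i2, i1 < size ws -> i2 < size ws -> i1 <> i2 ->
        ~ cyc_shift (nth [::] ws i1) (nth [::] ws i2)).

(* w(i,j): cyclic shift of w_i beginning with its j-th letter
   (0-based indices: i < N, j < t) *)
Definition wshift (l : nat) (ws : seq (seq 'I_l)) (i j : nat) : seq 'I_l :=
  rot j (nth [::] ws i).

Definition prec (l : nat) (ws : seq (seq 'I_l)) (p q : nat * nat) : bool :=
  (p.1 < q.1) && word_lt (wshift ws p.1 p.2) (wshift ws q.1 q.2).

Definition incomparable (l : nat) (ws : seq (seq 'I_l)) (p q : nat * nat) : bool :=
  ~~ prec ws p q && ~~ prec ws q p.

Definition n_light (t l : nat) (ws : seq (seq 'I_l)) (n : nat) : Prop :=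
  ~ exists S : seq (nat * nat),
      [/\ uniq S, size S = n,
          all (fun p => (p.1 < size ws) && (p.2 < t)) S &
          forall p q, p \in S -> q \in S -> p != q -> incomparable ws p q].

From mathcomp Require Import all_boot zify.
Set Implicit Arguments. Unset Strict Implicit. Unset Printing Implicit Defensive.

(* Totally order the pairs p = (i, j) lexicographically by the words w(i, j);
   p ≺ q then means that q is later both in index and in this order.  Let
   h(p) be the size of the largest antichain whose last element is p (largest
   index, lexicographically smallest); pairs of equal height are comparable,
   and 1 <= h(p) <= n - 1 by n-lightness.  For every word one can choose a
   shift j such that no earlier word i' has a shift j' with the same heights
   at (i', j'), (i', j'+1) and a leading-letter sum at least that of (i, j):
   otherwise the clashes found for j, j+1, j+2 would have cyclically
   increasing word indices.  Hence i |-> (h(i,j), h(i,j+1), first letter of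
   w(i,j) + first letter of w(i,j+1)) is injective, with two distinct heights
   in [1, n-1] and a sum at most 2l - 2. *)

Lemma lexlt_irr s : lexlt s s = false.
Proof. by elim: s => //= x s ->; rewrite ltnn eqxx. Qed.

Lemma lexlt_trans : transitive lexlt.
Proof.
move=> b a c; elim: a b c => [|x a IH] [|y b] [|z c] //=.
case/orP=> [hxy|/andP[/eqP <- hab]]; case/orP=> [hyz|/andP[/eqP <- hbc]].
- by rewrite (ltn_trans hxy hyz).
- by rewrite hxy.
- by rewrite hyz.
- by rewrite eqxx (IH _ _ hab hbc) orbT.
Qed.

Lemma lexlt_total a b : size a = size b -> a != b -> lexlt a b || lexlt b a.
Proof.
elim: a b => [|x a IH] [|y b] //= [hs].
case: (ltngtP x y) => [//|//|<-] hne /=.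
by apply: IH => //; apply: contra hne => /eqP ->.
Qed.

Section Height.

Variables (T : finType) (idx : T -> nat) (lt : rel T).

Definition dominates p q := (idx p < idx q) && lt p q.

Definition antichain (S : {set T}) :=
  [forall p in S, forall q in S, (p != q) ==> ~~ dominates p q].

Definition tail_antichain p (S : {set T}) :=
  [&& p \in S, antichain S & [forall q in S, (idx q <= idx p) && ~~ lt q p]].

Definition height p := \max_(S | tail_antichain p S) #|S|.

Lemma antichainP (S : {set T}) :
  reflect {in S &, forall p q, p != q -> ~~ dominates p q} (antichain S).
Proof.
apply: (iffP forall_inP) => [h p q hp hq|h p hp].
  exact/implyP/(forall_inP (h p hp)).
by apply/forall_inP => q hq; apply/implyP; apply: h.
Qed.

Hypothesis lt_irr : irreflexive lt.
Hypothesis lt_trans : transitive lt.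
Hypothesis lt_total : forall p q, p != q -> lt p q || lt q p.

Lemma lt_asym p q : lt p q -> ~~ lt q p.
Proof. by move=> hpq; apply/negP => /(lt_trans hpq); rewrite lt_irr. Qed.

Lemma tail_antichain1 p : tail_antichain p [set p].
Proof.
apply/and3P; split; first exact: set11.
  by apply/antichainP => q r /set1P -> /set1P ->; rewrite eqxx.
by apply/forall_inP => q /set1P ->; rewrite leqnn lt_irr.
Qed.

Lemma height_gt0 p : 0 < height p.
Proof.
have := @leq_bigmax_cond _ _ (fun S : {set T} => #|S|) _ (tail_antichain1 p).
by rewrite cards1.
Qed.

Lemma height_witness p : exists2 S, tail_antichain p S & #|S| = height p.
Proof.
have : 0 < #|[pred S | tail_antichain p S]|.
  by apply/card_gt0P; exists [set p]; rewrite inE tail_antichain1.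
case/(eq_bigmax_cond (fun S : {set T} => #|S|)) => S hS e.
by exists S; [rewrite inE in hS | exact: esym e].
Qed.

Lemma height_decr p q : idx q <= idx p -> lt p q -> height q < height p.
Proof.
move=> hqp hpq; have [S /and3P[hqS /antichainP hS hq] <-] := height_witness q.
have above r : r \in S -> lt p r && (idx r <= idx p).
  move=> hr; have /andP[hrq hnrq] := forall_inP hq r hr.
  rewrite (leq_trans hrq hqp) andbT; case: (eqVneq r q) => [-> //|hne].
  by have := lt_total hne; rewrite (negbTE hnrq) => /(lt_trans hpq).
have hpS : p \notin S by apply/negP => /above; rewrite lt_irr.
have : tail_antichain p (p |: S).
  apply/and3P; split; first exact: setU11.
    apply/antichainP => x y /setU1P[-> | hx] /setU1P[-> | hy]; rewrite ?eqxx //.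
    - by case/andP: (above y hy) => _ hy'; rewrite /dominates ltnNge hy'.
    - case/andP: (above x hx) => hx' _.
      by rewrite /dominates (negbTE (lt_asym hx')) andbF.
    - exact: hS.
  apply/forall_inP => x /setU1P[-> | /above /andP[hx hx']].
    by rewrite leqnn lt_irr.
  by rewrite hx' lt_asym.
by move/(@leq_bigmax_cond _ _ (fun S : {set T} => #|S|)); rewrite cardsU1 hpS.
Qed.

Lemma height_eq_idx_lt p q : height p = height q -> lt p q -> idx p < idx q.
Proof.
by move=> e hpq; rewrite ltnNge; apply/negP => /height_decr/(_ hpq); rewrite e ltnn.
Qed.

Lemma height_eq_lt p q : height p = height q -> idx p < idx q -> lt p q.
Proof.
move=> e hpq; have hne : p != q by apply: contraTneq hpq => ->; rewrite ltnn.
case/orP: (lt_total hne) => // /(height_eq_idx_lt (esym e)).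
by rewrite ltnNge ltnW.
Qed.

End Height.

Lemma rot_eq_rot (T : Type) (u v : seq T) j j' :
  j' <= j <= size u -> rot j u = rot j' v -> v = rot (j - j') u.
Proof.
case/andP=> hj'j hju; rewrite -{1}(subnKC hj'j) rotD ?subnKC //.
by move/rot_inj.
Qed.

Lemma rot_fixed_not_primitive l (w : seq 'I_l) d :
  size w = 3 -> 0 < d < 3 -> rot d w = w -> ~ primitive w.
Proof.
case: w => [|x [|y [|z [|]]]] // _ hd; move=> e hw; apply: (hw [:: x] 3) => //.
by case: d hd e => [|[|[|]]] // _ [*]; subst.
Qed.

Section Shifts.

Variables (l : nat) (ws : seq (seq 'I_l)).
Hypothesis hsys : is_system 3 ws.

Local Notation pair := ('I_(size ws) * 'I_3)%type.

Definition shift_word (p : pair) : seq nat := map val (wshift ws p.1 p.2).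
Definition shift_idx (p : pair) : nat := p.1.
Definition shift_lt (p q : pair) : bool := lexlt (shift_word p) (shift_word q).
Definition next_shift (p : pair) : pair := (p.1, ordS p.2).

Lemma size_word (i : 'I_(size ws)) : size (nth [::] ws i) = 3.
Proof. exact: (hsys.1 i (ltn_ord i)).1. Qed.

Lemma size_shift_word p : size (shift_word p) = 3.
Proof. by rewrite size_map size_rot size_word. Qed.

Lemma shift_word_next p : shift_word (next_shift p) = rot 1 (shift_word p).
Proof.
rewrite /shift_word /wshift -map_rot; congr map.
have := size_word p.1; case: p => i [[|[|[|j]]] hj] //= hs.
- by rewrite rot0.
- by rewrite -rotD ?hs.
- rewrite -rotD ?hs // modnn rot0.
  by rewrite (_ : 1 + 2 = size (nth [::] ws i)) ?rot_size ?hs.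
Qed.

Lemma shift_word_inj : injective shift_word.
Proof.
move=> [i j] [i' j'] /(inj_map val_inj); rewrite /wshift /=.
wlog hj : i j i' j' / j' <= j.
  move=> W; case: (leqP j' j) => [|/ltnW] h e; first exact: W.
  by symmetry; apply: W; rewrite // e.
move/rot_eq_rot; rewrite size_word hj ltnW //= => /(_ isT) e.
case: (eqVneq i i') => [ei | ne].
- subst i'; case: (posnP (j - j')) => d0.
    by congr (_, _); apply/val_inj/eqP; rewrite eqn_leq hj -subn_eq0 d0.
  case: (rot_fixed_not_primitive (size_word i) _ (esym e) (hsys.1 i (ltn_ord i)).2).
  by rewrite d0 (leq_ltn_trans (leq_subr _ _) (ltn_ord j)).
- case: (hsys.2 i i' (ltn_ord i) (ltn_ord i')).
    by move/val_inj/eqP; rewrite (negbTE ne).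
  by exists (j - j'); rewrite size_word (leq_ltn_trans (leq_subr _ _) (ltn_ord j)).
Qed.

Lemma shift_lt_irr : irreflexive shift_lt.
Proof. by move=> p; exact: lexlt_irr. Qed.

Lemma shift_lt_trans : transitive shift_lt.
Proof. by move=> q p r; exact: lexlt_trans. Qed.

Lemma shift_lt_total p q : p != q -> shift_lt p q || shift_lt q p.
Proof.
move=> hpq; apply: lexlt_total; first by rewrite !size_shift_word.
by apply: contra hpq => /eqP /shift_word_inj ->.
Qed.

Local Notation hh := (height shift_idx shift_lt).

Lemma shift_height_eq_lt p q :
  hh p = hh q -> shift_idx p < shift_idx q -> shift_lt p q.
Proof.
exact: (@height_eq_lt _ shift_idx _ shift_lt_irr shift_lt_trans shift_lt_total).
Qed.

Lemma shift_height_eq_idx_lt p q :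
  hh p = hh q -> shift_lt p q -> shift_idx p < shift_idx q.
Proof.
exact: (@height_eq_idx_lt _ shift_idx _ shift_lt_irr shift_lt_trans shift_lt_total).
Qed.

Lemma shift_word3 p : exists a b c, shift_word p = [:: a; b; c].
Proof.
have := size_shift_word p.
by case: shift_word => [|a [|b [|c [|]]]] // _; exists a, b, c.
Qed.

Lemma height_next_neq p : hh p != hh (next_shift p).
Proof.
apply/eqP => e; have hne : p != next_shift p.
  by case: p e => i [[|[|[|]]] ?] //= _; apply/eqP; case.
case/orP: (shift_lt_total hne) => h.
- by have := shift_height_eq_idx_lt e h; rewrite ltnn.
- by have := shift_height_eq_idx_lt (esym e) h; rewrite ltnn.
Qed.

Definition lead_sum p := head 0 (shift_word p) + head 0 (shift_word (next_shift p)).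

Lemma lead_sum_lt p : lead_sum p < 2 * l - 1.
Proof.
have lead_lt q : head 0 (shift_word q) < l.
  have := size_shift_word q; rewrite /shift_word.
  by case: wshift => //= x s _; exact: ltn_ord.
by have := lead_lt p; have := lead_lt (next_shift p); rewrite /lead_sum; lia.
Qed.

Definition clash p q :=
  [&& shift_idx q < shift_idx p, hh q == hh p, hh (next_shift q) == hh (next_shift p)
    & lead_sum p <= lead_sum q].

(* Equal heights and a smaller index put q and its successor lexicographically
   below p and its successor, so a' <= a and b' <= b; the sum condition then
   forces equality. *)
Lemma clash_letters p q : clash p q ->
  exists a b c c',
    [/\ shift_word p = [:: a; b; c], shift_word q = [:: a; b; c'] & c' < c].
Proof.
case/and4P=> hqp /eqP e1 /eqP e2 hv.
have := shift_height_eq_lt e1 hqp; have := shift_height_eq_lt e2 hqp.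
move: hv; rewrite /shift_lt /lead_sum !shift_word_next.
have [a [b [c ->]]] := shift_word3 p; have [a' [b' [c' ->]]] := shift_word3 q.
move=> /= hv h2 h1; exists a, b, c, c'.
have [ea eb] : a' = a /\ b' = b by lia.
by subst; split => //; lia.
Qed.

Lemma clash_idx_lt p q q' :
  clash p q -> clash (next_shift p) q' -> shift_idx q < shift_idx q'.
Proof.
move=> hq hq'; have [a [b [c [c' [ep eq hc]]]]] := clash_letters hq.
have [b2 [c2 [a2 [c'' [ep' eq' _]]]]] := clash_letters hq'.
move: ep' eq'; rewrite shift_word_next ep => -[<- <- _] eq'.
have e : hh (next_shift q) = hh q'.
  by case/and4P: hq => _ _ /eqP -> _; case/and4P: hq' => _ /eqP -> _.
apply: (shift_height_eq_idx_lt e).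
by rewrite /shift_lt shift_word_next eq eq' /= ltnn eqxx hc.
Qed.

Lemma next_shift3 p : next_shift (next_shift (next_shift p)) = p.
Proof. by case: p => i [[|[|[|]]] ?] //; congr (_, _); apply: val_inj. Qed.

Definition fresh p := [forall q, ~~ clash p q].

Lemma exists_fresh_shift (i : 'I_(size ws)) : exists j, fresh (i, j).
Proof.
apply/existsP; apply: contraT => /existsPn none.
have clashing j : exists q, clash (i, j) q.
  by have /forallPn[q] := none j; rewrite negbK; exists q.
pose p := (i, ord0 : 'I_3).
have [q0 h0] := clashing p.2; have [q1 h1] := clashing (next_shift p).2.
have [q2 h2] := clashing (next_shift (next_shift p)).2.
have h3 : clash (next_shift (next_shift (next_shift p))) q0 by rewrite next_shift3.
have := clash_idx_lt h0 h1; have := clash_idx_lt h1 h2; have := clash_idx_lt h2 h3.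
lia.
Qed.

Definition fresh_shift i : 'I_3 := xchoose (exists_fresh_shift i).

Lemma fresh_shiftP i : fresh (i, fresh_shift i).
Proof. exact: (xchooseP (exists_fresh_shift i)). Qed.

Section Signature.

Variable n : nat.
Hypothesis hlight : n_light 3 ws n.

Lemma antichain_card_lt (S : {set pair}) :
  antichain shift_idx shift_lt S -> #|S| < n.
Proof.
move/antichainP => hS; rewrite ltnNge; apply/negP => hn; apply: hlight.
exists [seq (val p.1 : nat, val p.2 : nat) | p <- take n (enum S)]; split.
- rewrite map_inj_uniq ?take_uniq ?enum_uniq //.
  by move=> [? ?] [? ?] [/val_inj -> /val_inj ->].
- by rewrite size_map size_takel // -cardE.
- by apply/allP => _ /mapP[p _ ->]; rewrite /= !ltn_ord.
move=> _ _ /mapP[x /mem_take hx ->] /mapP[y /mem_take hy ->] hxy.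
rewrite mem_enum in hx; rewrite mem_enum in hy.
have hne : x != y by apply: contraNneq hxy => ->.
(* [prec ws] on the underlying pairs of naturals is [dominates] by conversion. *)
by apply/andP; split; [exact: hS | apply: hS; rewrite // eq_sym].
Qed.

Lemma height_lt p : hh p < n.
Proof.
have [S /and3P[_ hS _] <-] := height_witness shift_idx shift_lt_irr p.
exact: antichain_card_lt.
Qed.

Lemma height_pred_lt p : (hh p).-1 < n.-1.
Proof. by have := height_lt p; have := height_gt0 shift_idx shift_lt_irr p; lia. Qed.

Definition height_ord p : 'I_n.-1 := Ordinal (height_pred_lt p).
Definition lead_sum_ord p : 'I_(2 * l - 1) := Ordinal (lead_sum_lt p).

Definition signature i :=
  let p := (i, fresh_shift i) in
  (height_ord p, height_ord (next_shift p), lead_sum_ord p).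

Lemma signature_offdiag i : (signature i).1.1 != (signature i).1.2.
Proof.
rewrite /signature /=; move: (i, fresh_shift i) => p.
move/eqP: (height_next_neq p) => hne.
have := height_gt0 shift_idx shift_lt_irr p.
have := height_gt0 shift_idx shift_lt_irr (next_shift p).
by move=> h1 h2; apply/eqP => /(congr1 val) /=; lia.
Qed.

Lemma signature_inj : injective signature.
Proof.
move=> i1 i2 /(congr1 (fun s => (val s.1.1, val s.1.2, val s.2))) /= [e1 e2 e3].
wlog lt12 : i1 i2 e1 e2 e3 / i1 < i2.
  move=> W; case: (ltngtP i1 i2) => [|h|/val_inj //]; first exact: W.
  by symmetry; apply: W.
have height_eq p q : (hh p).-1 = (hh q).-1 -> hh p = hh q.
  have := height_gt0 shift_idx shift_lt_irr p.
  by have := height_gt0 shift_idx shift_lt_irr q; lia.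
have := forallP (fresh_shiftP i2) (i1, fresh_shift i1).
by rewrite /clash /= lt12 e3 leqnn (height_eq _ _ e1) (height_eq _ _ e2) !eqxx.
Qed.

End Signature.
End Shifts.

Lemma card_offdiag (T : finType) :
  #|[set x : T * T | x.1 != x.2]| = #|T| * #|T|.-1.
Proof.
have -> : [set x : T * T | x.1 != x.2] = ~: [set (y, y) | y : T].
  apply/setP => -[x y]; rewrite !inE /=; congr negb.
  apply/eqP/imsetP => [-> | [z _ [-> ->]] //]; by exists y.
have := cardsC [set (y, y) | y : T].
rewrite card_imset; last by move=> x y [].
by rewrite card_prod -subn1 mulnBr muln1 => <-; rewrite addKn.
Qed.

Theorem mainTheorem17 (l n : nat) (hl : 1 <= l) (hn : 2 <= n)
  (ws : seq (seq 'I_l)) (hsys : is_system 3 ws) (hlight : n_light 3 ws n) :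
  size ws <= (2 * l - 1) * (n - 1) * (n - 2).
Proof.
pose D := [set s : 'I_n.-1 * 'I_n.-1 * 'I_(2 * l - 1) | s.1.1 != s.1.2].
have cardD : #|D| = n.-1 * n.-2 * (2 * l - 1).
  rewrite (_ : D = setX [set x | x.1 != x.2] setT); last first.
    by apply/setP => x; rewrite !inE andbT.
  by rewrite cardsX card_offdiag cardsT !card_ord.
have : #|[set signature hsys hlight i | i : 'I_(size ws)]| <= #|D|.
  by apply/subset_leq_card/subsetP => _ /imsetP[i _ ->]; rewrite inE signature_offdiag.
rewrite card_imset; last exact: signature_inj.
by rewrite card_ord cardD mulnC mulnA -!subn1 -subnDA.
Qed.
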